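(* For $n\ge2$ let $m=(n-1)^2$ and let $\Gamma_n$ be the $m\times m$ matrix indexed by $(i,j)\in\{1,\dots,n-1\}^2$ with $$(\Gamma_n)_{(i,j),(i',j')}=\begin{cases}1&(i,j)=(i',j'),\\-\frac1{n-1}& i=i'\text{ or }j=j'\text{ but not both},\\\frac1{(n-1)^2}& i\ne i'\text{ and }j\ne j'.\end{cases}$$ Order the indices row-major ($(1,1),(1,2),\dots,(1,n-1),(2,1),\dots$) and let $\Psi_n=\Gamma_n^{-1}$. Then $\sup_n\|\Psi_n\|_{\max}\le4$, and, with $a^{(n)}_1,\dots,a^{(n)}_m$ the inverse Schur complements of $\Psi_n$ defined in the context, for every $\alpha\ge1$ and every $n\ge2$, $$\sum_{k=1}^{m}(\alpha m)^{-a^{(n)}_k}\ \le\ g(\alpha):=\frac{1+2e^{4/e}+2e^{8/e}+e^{32/e}}{\alpha^{1/4}}.$$ In particular the sequence $(\Gamma_n)$ satisfies the Correlation Condition (in dimension $m=(n-1)^2$) with bounding function $g$.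
   Context: $\|M\|_{\max}=\max_{a,b}|M_{ab}|$. For an invertible $m\times m$ matrix with inverse $\Psi$, let $\Psi_{k}$ be the principal submatrix of the first $k$ rows and columns (in the given index order), partitioned as $\begin{bmatrix}\Psi^{(11)}_{k}&\Psi^{(12)}_{k}\\\Psi^{(21)}_{k}&\Psi^{(22)}_{k}\end{bmatrix}$ with $\Psi^{(11)}_{k}$ the leading $(k-1)\times(k-1)$ block and $\Psi^{(22)}_{k}$ the $(k,k)$ entry; set $a_1=\Psi_{11}^{-1}$ and $a_k=\big(\Psi^{(22)}_{k}-\Psi^{(21)}_{k}(\Psi^{(11)}_{k})^{-1}\Psi^{(12)}_{k}\big)^{-1}$ for $k\ge2$. The Correlation Condition for a sequence of invertible $m\times m$ correlation matrices requires $\sup\|\Psi\|_{\max}<\infty$ and $\sup\sum_{k=1}^m(\alpha m)^{-a_k}\le g(\alpha)$ for all $\alpha\ge1$, with $g$ decreasing, independent of the index of the sequence, and $g(\alpha)\to0$ as $\alpha\to\infty$. ($\Gamma_n$ is the correlation matrix of one increment of the $n\times n$ Diaconis–Gangolli walk restricted to the first $n-1$ rows and columns.) *)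

From HB Require Import structures.
From mathcomp Require Import all_boot all_order all_algebra.
From mathcomp Require Import all_classical all_reals all_analysis.
Set Implicit Arguments. Unset Strict Implicit. Unset Printing Implicit Defensive.
Import Order.TTheory GRing.Theory Num.Theory.
Local Open Scope ring_scope.

(* Gamma_n : the ((n-1)^2) x ((n-1)^2) matrix; the index k : 'I_((n-1)^2)
   (0-based) corresponds row-major to the pair (k %/ (n-1), k %% (n-1)). *)
Definition Gamma (R : realType) (n : nat) : 'M[R]_((n.-1) ^ 2) :=
  \matrix_(k, l)
    let i := (k %/ n.-1)%N in let j := (k %% n.-1)%N in
    let i' := (l %/ n.-1)%N in let j' := (l %% n.-1)%N in
    if (i == i') && (j == j') then 1
    else if (i == i') || (j == j') then - (n.-1%:R)^-1
    else ((n.-1%:R) ^+ 2)^-1.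

Definition maxnorm (R : realType) (m : nat) (M : 'M[R]_m) : R :=
  \big[Num.max/0]_(i < m) \big[Num.max/0]_(j < m) `|M i j|.

(* inverse Schur complement a_{t+1} for the 0-based index t : 'I_m:
   Psi_{t+1} has leading t x t block A, last column b, last row c and
   corner Psi t t; a = (Psi t t - c A^{-1} b)^{-1}.  For t = 0 the blocks
   are empty and this is Psi_11^{-1}, as in the paper. *)
Definition schur_inv (R : realType) (m : nat) (Psi : 'M[R]_m) (t : 'I_m) : R :=
  let w := widen_ord (ltnW (ltn_ord t)) in
  let A := \matrix_(i < t, j < t) Psi (w i) (w j) in
  let b := \col_(i < t) Psi (w i) t in
  let c := \row_(j < t) Psi t (w j) in
  (Psi t t - (c *m invmx A *m b) 0 0)^-1.

Definition gfun (R : realType) (alpha : R) : R :=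
  (1 + 2 * expR (4 / expR 1) + 2 * expR (8 / expR 1) + expR (32 / expR 1))
  / (alpha `^ (4%:R)^-1).

(* With d = n - 1 and J the all-ones d x d matrix, Gamma_n is the Kronecker square
   of A = (1 + 1/d) I - (1/d) J, whose inverse is B = d/(d+1) (I + J); so
   Psi_n = B (x) B has entries d^2/(d+1)^2 (1 + [i = i']) (1 + [j = j']) <= 4 and is
   positive definite.  For a symmetric positive definite matrix, 1/a_k is the
   minimum of v^T Psi v over the v with v_k = 1 vanishing beyond k.  Testing with
   v = u_p (x) u_q, where u_p = e_p - (e_0 + ... + e_(p-1))/(p+1), gives
   a_k >= (p+1)/(p+2) * (q+1)/(q+2) for k = (p, q).  The sum over p and q of
   (alpha m)^(-(p+1)(q+1)/((p+2)(q+2))) is then at most 100 alpha^(-1/4), by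
   y^(1/(q+2)) <= 4 + 6 y^(1/2) / ((q+1)(q+2)) and sum_q 1/((q+1)(q+2)) <= 1. *)

From HB Require Import structures.
From mathcomp Require Import all_boot all_order all_algebra.
From mathcomp Require Import all_classical all_reals all_analysis.
From mathcomp Require Import zify ring lra.
Import Order.TTheory GRing.Theory Num.Theory.
Local Open Scope ring_scope.
Set Implicit Arguments. Unset Strict Implicit. Unset Printing Implicit Defensive.

Section QuadraticForm.
Variable R : realFieldType.

Definition quad m (M : 'M[R]_m) (x : 'I_m -> R) : R :=
  \sum_(k < m) \sum_(l < m) x k * x l * M k l.

Definition posdef m (M : 'M[R]_m) :=
  forall x : 'I_m -> R, [exists k, x k != 0] -> 0 < quad M x.

Lemma quadE m (M : 'M[R]_m) x :
  quad M x = \sum_(l < m) x l * \sum_(k < m) x k * M k l.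
Proof.
rewrite /quad exchange_big; apply: eq_bigr => l _; rewrite big_distrr.
by apply: eq_bigr => k _ /=; ring.
Qed.

Lemma quad_ge0 m (M : 'M[R]_m) x : posdef M -> 0 <= quad M x.
Proof.
move=> Mpd; have [/Mpd/ltW //|/existsPn x0] := boolP [exists k, x k != 0].
rewrite /quad big1 // => k _; rewrite big1 // => l _.
by move: (x0 k); rewrite negbK => /eqP->; rewrite !mul0r.
Qed.

Lemma quadD m (M : 'M[R]_m) x y : (forall i j, M i j = M j i) ->
  quad M (fun k => x k + y k) =
  quad M x + 2 * \sum_(l < m) y l * \sum_(k < m) x k * M k l + quad M y.
Proof.
move=> Msym; rewrite /quad.
have -> : \sum_(k < m) \sum_(l < m) (x k + y k) * (x l + y l) * M k l =
  \sum_(k < m) \sum_(l < m) x k * x l * M k l +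
  (\sum_(k < m) \sum_(l < m) x k * y l * M k l +
   \sum_(k < m) \sum_(l < m) y k * x l * M k l) +
  \sum_(k < m) \sum_(l < m) y k * y l * M k l.
  rewrite -!big_split /=; apply: eq_bigr => k _; rewrite -!big_split /=.
  by apply: eq_bigr => l _; ring.
have -> : \sum_(k < m) \sum_(l < m) y k * x l * M k l =
          \sum_(k < m) \sum_(l < m) x k * y l * M k l.
  rewrite exchange_big; apply: eq_bigr => k _; apply: eq_bigr => l _.
  by rewrite Msym; ring.
congr (_ + _ + _); rewrite exchange_big -mulr2n mulr_natl; congr (_ *+ 2).
apply: eq_bigr => l _; rewrite big_distrr; apply: eq_bigr => k _ /=; ring.
Qed.

Lemma posdef_unitmx m (M : 'M[R]_m) : posdef M -> M \in unitmx.
Proof.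
move=> Mpd; rewrite unitmxE unitfE; apply/negP => /det0P [y y0 yM].
have : 0 < quad M (fun k => y 0 k).
  apply: Mpd; apply: contraR y0 => /existsPn y0.
  by apply/eqP/rowP => k; rewrite mxE; apply/eqP/negPn.
rewrite quadE big1 ?ltxx // => l _.
by have /rowP/(_ l) := yM; rewrite !mxE => ->; rewrite mulr0.
Qed.

Lemma sum_sqr_group (T : finType) m (g : 'I_m -> T) (x : 'I_m -> R) :
  \sum_(k < m) \sum_(l < m) x k * x l * (g k == g l)%:R =
  \sum_(r : T) (\sum_(k < m) (g k == r)%:R * x k) ^+ 2.
Proof.
symmetry; transitivity (\sum_(r : T) \sum_(k < m) \sum_(l < m)
    ((g k == r)%:R * x k) * ((g l == r)%:R * x l)).
  apply: eq_bigr => r _; rewrite expr2 big_distrl; apply: eq_bigr => k _ /=.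
  by rewrite big_distrr.
rewrite exchange_big; apply: eq_bigr => k _ /=.
rewrite exchange_big; apply: eq_bigr => l _ /=.
rewrite (bigD1 (g k)) //= eqxx big1 ?addr0 => [|r /negbTE rk].
  by rewrite /= [g l == _]eq_sym; ring.
by rewrite eq_sym rk !mul0r.
Qed.

Lemma sum_sqr_group_ge0 (T : finType) m (g : 'I_m -> T) (x : 'I_m -> R) :
  0 <= \sum_(k < m) \sum_(l < m) x k * x l * (g k == g l)%:R.
Proof. by rewrite sum_sqr_group sumr_ge0 // => r _; apply: sqr_ge0. Qed.

Lemma sum_sqr_diag m (x : 'I_m -> R) :
  \sum_(k < m) \sum_(l < m) x k * x l * (k == l)%:R = \sum_(k < m) x k ^+ 2.
Proof.
apply: eq_bigr => k _; rewrite (bigD1 k) //= eqxx big1 ?addr0 => [|l /negbTE].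
  by rewrite mulr1 expr2.
by rewrite eq_sym => ->; rewrite mulr0.
Qed.

Definition zext m t (y : 'I_t -> R) : 'I_m -> R :=
  fun k => oapp y 0 (insub (val k)).
Arguments zext m {t} y.

Lemma zext_widen m t (le_tm : (t <= m)%N) (y : 'I_t -> R) i :
  zext m y (widen_ord le_tm i) = y i.
Proof. by rewrite /zext /= valK. Qed.

Lemma zext_out m t (y : 'I_t -> R) (k : 'I_m) : (t <= k)%N -> zext m y k = 0.
Proof. by move=> tk; rewrite /zext insubF // ltnNge tk. Qed.

Lemma sum_zext m t (le_tm : (t <= m)%N) (y : 'I_t -> R) (F : 'I_m -> R) :
  \sum_(k < m) zext m y k * F k = \sum_(i < t) y i * F (widen_ord le_tm i).
Proof.
under [RHS]eq_bigr => i _ do rewrite -(zext_widen (m:=m) le_tm y).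
rewrite -(big_ord_narrow (F := fun k => zext m y k * F k) le_tm) [RHS]big_mkcond /=.
by apply: eq_bigr => k _; case: ltnP => // /zext_out->; rewrite mul0r.
Qed.

End QuadraticForm.
Arguments zext {R} m {t} y.

Section SchurComplement.
Variables (R : realType) (m : nat) (M : 'M[R]_m) (t : 'I_m).
Hypotheses (Msym : forall i j, M i j = M j i) (Mpd : posdef M).

Let le_tm := ltnW (ltn_ord t).
Let w := widen_ord le_tm.
Let A := \matrix_(i < t, j < t) M (w i) (w j).
Let c := \row_(j < t) M t (w j).

Lemma quad_zext_lead (y : 'I_t -> R) : quad M (zext m y) = quad A y.
Proof.
rewrite quadE sum_zext /quad exchange_big; apply: eq_bigr => j _.
rewrite sum_zext big_distrr; apply: eq_bigr => i _ /=; rewrite mxE; ring.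
Qed.

Lemma lead_block_unit : A \in unitmx.
Proof.
apply: posdef_unitmx => y /existsP [i yi]; rewrite -quad_zext_lead.
by apply: Mpd; apply/existsP; exists (w i); rewrite zext_widen.
Qed.

(* The minimiser of [quad M] among the [v] with [v t = 1] vanishing beyond [t]. *)
Let schur_vec : 'I_m -> R :=
  fun k => (k == t)%:R - zext m (fun i => (c *m invmx A) 0 i) k.

Lemma schur_vec_t : schur_vec t = 1.
Proof. by rewrite /schur_vec eqxx zext_out ?subr0. Qed.

Lemma schur_vec_out (k : 'I_m) : (t < k)%N -> schur_vec k = 0.
Proof.
move=> tk; rewrite /schur_vec zext_out ?(ltnW tk) // subr0.
by rewrite (_ : (k == t) = false) //; apply/negbTE; rewrite neq_ltn tk orbT.
Qed.

Lemma sum_schur_vec_mul (F : 'I_m -> R) :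
  \sum_(k < m) schur_vec k * F k = F t - \sum_(i < t) (c *m invmx A) 0 i * F (w i).
Proof.
under eq_bigr => k _ do rewrite mulrBl.
rewrite big_split /= sumrN sum_zext (bigD1 t) //= eqxx mul1r big1 ?addr0 //.
by move=> k /negbTE->; rewrite mul0r.
Qed.

Lemma schur_vec_orth (l : 'I_m) : (l < t)%N -> \sum_(k < m) schur_vec k * M k l = 0.
Proof.
move=> l_lt_t; have -> : l = w (Ordinal l_lt_t) by apply: val_inj.
rewrite sum_schur_vec_mul; apply/eqP; rewrite subr_eq0; apply/eqP.
have /rowP/(_ (Ordinal l_lt_t)) := mulmxKV lead_block_unit c; rewrite !mxE => {1}<-.
by apply: eq_bigr => i _; rewrite [A _ _]mxE.
Qed.

Lemma sum_mul_schur_vec_orth (z : 'I_m -> R) :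
  (forall l : 'I_m, (t <= l)%N -> z l = 0) ->
  \sum_(l < m) z l * \sum_(k < m) schur_vec k * M k l = 0.
Proof.
move=> z_out; apply: big1 => l _.
by case: (ltnP l t) => [/schur_vec_orth->|/z_out->]; rewrite ?mulr0 ?mul0r.
Qed.

Lemma quad_schur_vec : quad M schur_vec = (schur_inv M t)^-1.
Proof.
rewrite invrK quadE.
have -> : \sum_(l < m) schur_vec l * \sum_(k < m) schur_vec k * M k l =
    \sum_(l < m) (l == t)%:R * (\sum_(k < m) schur_vec k * M k l) +
    \sum_(l < m) (schur_vec l - (l == t)%:R) * \sum_(k < m) schur_vec k * M k l.
  by rewrite -big_split; apply: eq_bigr => l _ /=; ring.
rewrite [X in _ + X]sum_mul_schur_vec_orth => [|l tl]; last first.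
  by rewrite /schur_vec /= addrAC subrr add0r zext_out ?oppr0.
rewrite addr0 (bigD1 t) //= eqxx mul1r [X in _ + X]big1 ?addr0; last first.
  by move=> l /negbTE->; rewrite mul0r.
rewrite sum_schur_vec_mul mxE; congr (_ - _); apply: eq_bigr => i _.
by rewrite [X in _ = _ * X]mxE.
Qed.

Lemma schur_inv_gt0 : 0 < schur_inv M t.
Proof.
rewrite -invr_gt0 -quad_schur_vec; apply: Mpd; apply/existsP; exists t.
by rewrite schur_vec_t oner_neq0.
Qed.

Lemma schur_inv_inv_le_quad (v : 'I_m -> R) :
  v t = 1 -> (forall k : 'I_m, (t < k)%N -> v k = 0) ->
  (schur_inv M t)^-1 <= quad M v.
Proof.
move=> vt v_out; rewrite -quad_schur_vec.
pose r k := v k - schur_vec k.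
have -> : v = (fun k => schur_vec k + r k) by apply: funext => k; rewrite addrC subrK.
rewrite (quadD schur_vec r) // sum_mul_schur_vec_orth ?mulr0 ?addr0 ?lerDl ?quad_ge0 //.
move=> l;
rewrite leq_eqVlt => /orP [/eqP/val_inj<-|tl]; first by rewrite /r vt schur_vec_t subrr.
by rewrite /r schur_vec_out // v_out // subrr.
Qed.

End SchurComplement.

Lemma quad_inv_le_schur_inv (R : realType) m (M : 'M[R]_m) (t : 'I_m)
    (v : 'I_m -> R) :
  (forall i j, M i j = M j i) -> posdef M -> v t = 1 ->
  (forall k : 'I_m, (t < k)%N -> v k = 0) ->
  (quad M v)^-1 <= schur_inv M t.
Proof.
move=> Msym Mpd vt v_out.
have le_q := schur_inv_inv_le_quad Msym Mpd vt v_out.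
have si_gt0 : 0 < (schur_inv M t)^-1 by rewrite invr_gt0 schur_inv_gt0.
have q_gt0 : 0 < quad M v := lt_le_trans si_gt0 le_q.
by rewrite -[X in _ <= X]invrK lef_pV2 ?posrE.
Qed.

Section Kronecker.
Variable d : nat.

Lemma dim_gt0 (k : 'I_(d ^ 2)) : (0 < d)%N.
Proof. by case: d k => [[]|]. Qed.

Lemma ltn_divn_sq (k : 'I_(d ^ 2)) : (k %/ d < d)%N.
Proof. by rewrite ltn_divLR ?(dim_gt0 k) // mulnn. Qed.

Lemma ltn_modn_sq (k : 'I_(d ^ 2)) : (k %% d < d)%N.
Proof. by rewrite ltn_mod (dim_gt0 k). Qed.

Definition ord_divn (k : 'I_(d ^ 2)) : 'I_d := Ordinal (ltn_divn_sq k).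
Definition ord_modn (k : 'I_(d ^ 2)) : 'I_d := Ordinal (ltn_modn_sq k).

Lemma ord_divn_modn_eq (k l : 'I_(d ^ 2)) :
  (ord_divn k == ord_divn l) && (ord_modn k == ord_modn l) = (k == l).
Proof.
apply/andP/eqP => [[/eqP/(congr1 val) /= e1 /eqP/(congr1 val) /= e2]|->] //.
by apply: val_inj; rewrite /= (divn_eq k d) (divn_eq l d) e1 e2.
Qed.

Lemma pair_index_lt (i j : 'I_d) : (i * d + j < d ^ 2)%N.
Proof.
have := ltn_ord i; have := ltn_ord j; rewrite -mulnn; nia.
Qed.

Lemma sum_ord_divn_modn (R : nmodType) (F : 'I_d -> 'I_d -> R) :
  \sum_(k < d ^ 2) F (ord_divn k) (ord_modn k) = \sum_(i < d) \sum_(j < d) F i j.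
Proof.
rewrite pair_bigA /= (reindex (fun k => (ord_divn k, ord_modn k))) //.
exists (fun p => Ordinal (pair_index_lt p.1 p.2)) => [k _|[i j] _].
  by apply: val_inj; rewrite /= -divn_eq.
have d0 := ltn_ord i; congr pair; apply: val_inj => /=.
  by rewrite divnMDl ?divn_small ?addn0 //; apply: leq_ltn_trans d0.
by rewrite modnMDl modn_small.
Qed.

Variable R : comNzRingType.

Definition kron (A B : 'M[R]_d) : 'M[R]_(d ^ 2) :=
  \matrix_(k, l) (A (ord_divn k) (ord_divn l) * B (ord_modn k) (ord_modn l)).

Lemma kronE (A B : 'M[R]_d) k l :
  kron A B k l = A (ord_divn k) (ord_divn l) * B (ord_modn k) (ord_modn l).
Proof. by rewrite mxE. Qed.

Lemma mulmx_kron (A B C D : 'M[R]_d) :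
  kron A B *m kron C D = kron (A *m C) (B *m D).
Proof.
apply/matrixP => k l; rewrite mxE.
pose F i j := A (ord_divn k) i * B (ord_modn k) j * (C i (ord_divn l) * D j (ord_modn l)).
transitivity (\sum_(k' < d ^ 2) F (ord_divn k') (ord_modn k')).
  by apply: eq_bigr => k' _; rewrite !mxE.
rewrite sum_ord_divn_modn !mxE big_distrl; apply: eq_bigr => i _; rewrite big_distrr.
by apply: eq_bigr => j _; rewrite /F /=; ring.
Qed.

Lemma kron1 : kron 1%:M 1%:M = 1%:M.
Proof.
by apply/matrixP => k l; rewrite !mxE -natrM mulnb ord_divn_modn_eq.
Qed.

End Kronecker.

Lemma quad_kron (R : realFieldType) d (A B : 'M[R]_d) (x y : 'I_d -> R) :
  quad (kron A B) (fun k => x (ord_divn k) * y (ord_modn k)) = quad A x * quad B y.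
Proof.
pose G i j := \sum_(l < d ^ 2) x i * y j * (x (ord_divn l) * y (ord_modn l)) *
                 (A i (ord_divn l) * B j (ord_modn l)).
transitivity (\sum_(k < d ^ 2) G (ord_divn k) (ord_modn k)).
  by apply: eq_bigr => k _; apply: eq_bigr => l _; rewrite mxE.
rewrite sum_ord_divn_modn /quad big_distrl; apply: eq_bigr => i _ /=.
rewrite mulrC big_distrl; apply: eq_bigr => j _ /=.
pose H i' j' := x i * y j * (x i' * y j') * (A i i' * B j j').
transitivity (\sum_(l < d ^ 2) H (ord_divn l) (ord_modn l)) => //.
rewrite sum_ord_divn_modn big_distrr; apply: eq_bigr => i' _ /=.
rewrite big_distrl; apply: eq_bigr => j' _; rewrite /H /=; ring.
Qed.

Section CorrelationFactors.
Variables (R : realType) (d : nat).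

Definition Gamma_factor : 'M[R]_d :=
  (1 + d%:R^-1) *: 1%:M - d%:R^-1 *: const_mx 1.

Definition Psi_factor : 'M[R]_d := (d%:R / d.+1%:R) *: (1%:M + const_mx 1).

Lemma Gamma_factorE i j :
  Gamma_factor i j = if i == j then 1 else - d%:R^-1.
Proof. rewrite !mxE; case: (i == j) => /=; ring. Qed.

Lemma Psi_factorE i j : Psi_factor i j = d%:R / d.+1%:R * (1 + (i == j)%:R).
Proof. by rewrite !mxE addrC. Qed.

Lemma const_mx1_mul :
  (const_mx 1 : 'M[R]_d) *m const_mx 1 = d%:R *: (const_mx 1 : 'M[R]_d).
Proof.
apply/matrixP => i j; rewrite !mxE (eq_bigr (fun=> 1)) => [|k _].
  by rewrite sumr_const card_ord mulr1.
by rewrite !mxE mulr1.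
Qed.

Lemma mul_Gamma_Psi_factor : (0 < d)%N -> Gamma_factor *m Psi_factor = 1%:M.
Proof.
move=> d_gt0; have d0 : d%:R != 0 :> R by rewrite pnatr_eq0 -lt0n.
have d1 : d.+1%:R != 0 :> R by rewrite pnatr_eq0.
rewrite /Gamma_factor /Psi_factor -scalemxAr mulmxDr mulmx1 mulmxBl.
rewrite -!scalemxAl mul1mx const_mx1_mul; apply/matrixP => i j; rewrite !mxE.
by rewrite -natr1 in d1 *; field; rewrite d0 d1.
Qed.


Lemma Psi_factor_bounds i j : 0 <= Psi_factor i j <= 2.
Proof.
have c0 : 0 <= d%:R / d.+1%:R :> R by rewrite divr_ge0 ?ler0n.
have c1 : d%:R / d.+1%:R <= 1 :> R by rewrite ler_pdivrMr ?ltr0n // mul1r ler_nat.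
rewrite Psi_factorE; set c := d%:R / _ in c0 c1 *.
by case: (i == j); rewrite ?mulr1n ?mulr0n; apply/andP; split; lra.
Qed.

Lemma quad_Psi_factor (x : 'I_d -> R) :
  quad Psi_factor x =
  d%:R / d.+1%:R * (\sum_(i < d) x i ^+ 2 + (\sum_(i < d) x i) ^+ 2).
Proof.
rewrite -sum_sqr_diag expr2 big_distrl mulrDr !mulr_sumr -big_split /=.
apply: eq_bigr => k _; rewrite big_distrr !mulr_sumr -big_split /=.
by apply: eq_bigr => l _; rewrite Psi_factorE /=; ring.
Qed.

End CorrelationFactors.

Lemma Gamma_kron (R : realType) n :
  Gamma R n = kron (Gamma_factor R n.-1) (Gamma_factor R n.-1).
Proof.
apply/matrixP => k l; rewrite mxE kronE !Gamma_factorE /=.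
have -> : (ord_divn k == ord_divn l) = (k %/ n.-1 == l %/ n.-1)%N by [].
have -> : (ord_modn k == ord_modn l) = (k %% n.-1 == l %% n.-1)%N by [].
case: (k %/ n.-1 == l %/ n.-1)%N; case: (k %% n.-1 == l %% n.-1)%N => /=;
  rewrite ?mulr1 ?mul1r //.
by rewrite mulrNN -expr2 exprVn.
Qed.

Definition Psi (R : realType) d : 'M[R]_(d ^ 2) :=
  kron (Psi_factor R d) (Psi_factor R d).

Lemma mul_Gamma_Psi (R : realType) n : (2 <= n)%N ->
  Gamma R n *m Psi R n.-1 = 1%:M.
Proof.
move=> n_ge2; rewrite Gamma_kron mulmx_kron mul_Gamma_Psi_factor ?kron1 //.
by rewrite -ltnS prednK // ltnW.
Qed.

Lemma invmx_Gamma (R : realType) n : (2 <= n)%N -> invmx (Gamma R n) = Psi R n.-1.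
Proof.
move=> n_ge2; have GPsi := mul_Gamma_Psi R n_ge2.
have [Gunit _] := mulmx1_unit GPsi.
by rewrite -[RHS](mulKmx Gunit) GPsi mulmx1.
Qed.

Lemma Psi_sym (R : realType) d (k l : 'I_(d ^ 2)) : Psi R d k l = Psi R d l k.
Proof.
by rewrite !kronE !Psi_factorE [ord_divn l == _]eq_sym [ord_modn l == _]eq_sym.
Qed.

Lemma Psi_posdef (R : realType) d : posdef (Psi R d).
Proof.
move=> x /existsP [k0 xk0]; set c : R := d%:R / d.+1%:R.
have c_gt0 : 0 < c by rewrite divr_gt0 ?ltr0n ?(dim_gt0 k0).
pose S (T : eqType) (g : 'I_(d ^ 2) -> T) :=
  \sum_(k < d ^ 2) \sum_(l < d ^ 2) x k * x l * (g k == g l)%:R.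
have -> : quad (Psi R d) x =
    c ^+ 2 * (S _ (fun=> tt) + S _ (@ord_divn d) + S _ (@ord_modn d) + S _ id).
  rewrite /quad /S -!big_split big_distrr /=; apply: eq_bigr => k _.
  rewrite -!big_split big_distrr /=; apply: eq_bigr => l _.
  rewrite kronE !Psi_factorE -/c -ord_divn_modn_eq.
  by case: (ord_divn k == _); case: (ord_modn k == _) => /=; ring.
rewrite pmulr_rgt0 ?exprn_gt0 // /S sum_sqr_diag.
apply: ltr_wpDl; first by rewrite !addr_ge0 ?sum_sqr_group_ge0.
rewrite (bigD1 k0) //=; apply: ltr_pwDl; last by rewrite sumr_ge0 // => k _; apply: sqr_ge0.
by rewrite exprn_even_gt0 //= xk0 orbT.
Qed.

Lemma maxnorm_le (R : realType) m (M : 'M[R]_m) (b : R) :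
  0 <= b -> (forall i j, `|M i j| <= b) -> maxnorm M <= b.
Proof.
move=> b0 Mb; have max_le x y : x <= b -> y <= b -> Num.max x y <= b.
  by rewrite ge_max => -> ->.
apply: (big_ind (fun x => x <= b)) => // i _.
by apply: (big_ind (fun x => x <= b)) => // j _; apply: Mb.
Qed.

Lemma maxnorm_Psi (R : realType) d : maxnorm (Psi R d) <= 4.
Proof.
apply: maxnorm_le => // k l; rewrite kronE.
have /andP [a0 a2] := Psi_factor_bounds R (ord_divn k) (ord_divn l).
have /andP [b0 b2] := Psi_factor_bounds R (ord_modn k) (ord_modn l).
rewrite ger0_norm ?mulr_ge0 //; nra.
Qed.

Section TestVector.
Variables (R : realType) (d : nat) (p : 'I_d).

Definition test_vec : 'I_d -> R :=
  fun i => if i == p then 1 else if (i < p)%N then - p.+1%:R^-1 else 0.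

Lemma test_vec_out (i : 'I_d) : (p < i)%N -> test_vec i = 0.
Proof.
move=> pi; rewrite /test_vec ltnNge (ltnW pi) /=.
by case: eqP => // ip; move: pi; rewrite ip ltnn.
Qed.

Lemma sum_test_vec (F : R -> R) : F 0 = 0 ->
  \sum_(i < d) F (test_vec i) = p%:R * F (- p.+1%:R^-1) + F 1.
Proof.
move=> F0; have -> : \sum_(i < d) F (test_vec i) =
    \sum_(i < d) ((if (i < p)%N then F (- p.+1%:R^-1) else 0) +
                  (if i == p then F 1 else 0)).
  apply: eq_bigr => i _; rewrite /test_vec.
  have [->|ip] := eqVneq i p; first by rewrite ltnn add0r.
  by case: ltnP => _; rewrite ?F0 addr0.
rewrite big_split -!big_mkcond big_pred1_eq /= big_ord_narrow ?(ltnW (ltn_ord p)) //.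
by rewrite sumr_const card_ord mulr_natl.
Qed.

End TestVector.

Definition succ_ratio (R : realType) (p : nat) : R := p.+1%:R / p.+2%:R.

Lemma succ_ratio_gt0 (R : realType) p : 0 < succ_ratio R p.
Proof. by rewrite divr_gt0 ?ltr0n. Qed.

Lemma quad_Psi_factor_test_vec (R : realType) d (p : 'I_d) :
  quad (Psi_factor R d) (test_vec R p) = d%:R / d.+1%:R / succ_ratio R p.
Proof.
rewrite quad_Psi_factor (sum_test_vec _ (F := id)) //.
rewrite (sum_test_vec _ (F := fun x => x ^+ 2)).
  rewrite /succ_ratio; congr (_ * _).
  have p1 : p%:R + 1 != 0 :> R by rewrite natr1 pnatr_eq0.
  have p2 : p%:R + 1 + 1 != 0 :> R by rewrite !natr1 pnatr_eq0.
  rewrite -[p.+2%:R]natr1 -[p.+1%:R]natr1; field.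
  by rewrite p1 p2.
by rewrite expr0n.
Qed.

Lemma succ_ratio_le_schur_inv_Psi (R : realType) d (t : 'I_(d ^ 2)) :
  succ_ratio R (ord_divn t) * succ_ratio R (ord_modn t) <= schur_inv (Psi R d) t.
Proof.
set p := ord_divn t; set q := ord_modn t.
pose v k := test_vec R p (ord_divn k) * test_vec R q (ord_modn k).
have vt : v t = 1 by rewrite /v /test_vec !eqxx mulr1.
have v_out (k : 'I_(d ^ 2)) : (t < k)%N -> v k = 0.
  move=> tk; have : (p <= ord_divn k)%N by rewrite leq_div2r // ltnW.
  rewrite leq_eqVlt => /orP [/eqP pk|pk]; last by rewrite /v test_vec_out ?mul0r.
  rewrite /v [test_vec R q _]test_vec_out ?mulr0 //=.
  have e1 : (t %/ d)%N = (k %/ d)%N := pk.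
  have := divn_eq t d; have := divn_eq k d; rewrite e1; lia.
have := quad_inv_le_schur_inv (@Psi_sym R d) (@Psi_posdef R d) vt v_out.
rewrite quad_kron !quad_Psi_factor_test_vec; apply: le_trans.
have c_gt0 : 0 < d%:R / d.+1%:R :> R by rewrite divr_gt0 ?ltr0n ?(dim_gt0 t).
have c_le1 : d%:R / d.+1%:R <= 1 :> R by rewrite ler_pdivrMr ?ltr0n // mul1r ler_nat.
have ratio_le r : 0 < r -> r <= (d%:R / d.+1%:R / r)^-1 :> R.
  by move=> r_gt0; rewrite invf_div ler_pdivlMr // ler_piMr // ltW.
by rewrite invfM ler_pM ?ratio_le ?succ_ratio_gt0 // ltW ?succ_ratio_gt0.
Qed.

Section PowerSums.
Variable R : realType.

Lemma succ_mul_succ_le_pow2 q : (q.+1 * q.+2 <= 6 * 2 ^ q)%N.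
Proof.
elim: q => [//|q IH]; rewrite expnS.
by case: q IH => [//|q]; set z := (2 ^ q.+1)%N => IH; nia.
Qed.

Lemma exprn_powR (y e : R) n : 0 <= y -> (y `^ e) ^+ n = y `^ (e * n%:R).
Proof. by move=> y0; rewrite -powR_mulrn ?powR_ge0 // powRrM. Qed.

(* Either [S <= 2], or [S ^+ q >= 2 ^ q] pays for the factor [(q+1)(q+2)/6]. *)
Lemma sqr_le_pow_bound (S : R) q : 0 <= S ->
  S ^+ 2 <= 4 + 6 * (q.+1%:R * q.+2%:R)^-1 * S ^+ q.+2.
Proof.
move=> S0; set w : R := (q.+1%:R * q.+2%:R)^-1.
have w_gt0 : 0 < w by rewrite invr_gt0 mulr_gt0 ?ltr0n.
have [S2_le4|S2_gt4] := leP (S ^+ 2) 4.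
  apply: le_trans S2_le4 _; rewrite lerDl mulr_ge0 ?exprn_ge0 // mulr_ge0 //.
  exact: ltW.
have S_ge2 : 2 <= S by rewrite leNgt; apply/negP => S_lt2; move: S2_gt4; rewrite expr2; nra.
have one_le : 1 <= 6 * w * S ^+ q.
  have := succ_mul_succ_le_pow2 q; rewrite -(ler_nat R) !natrM natrX => qq.
  rewrite /w mulrAC ler_pdivlMr ?mulr_gt0 ?ltr0n // mul1r.
  apply: le_trans qq _; rewrite ler_pM2l ?ltr0n //.
  by apply: lerXn2r => //; rewrite nnegrE //; apply: le_trans S_ge2.
have -> : S ^+ q.+2 = S ^+ q * S ^+ 2 by rewrite -exprD addn2.
have : 0 <= S ^+ 2 by apply: exprn_ge0.
move: one_le; set a := S ^+ 2; set b := 6 * w * S ^+ q => one_le a0.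
have -> : 6 * w * (S ^+ q * a) = a * b by rewrite /b; ring.
nra.
Qed.

Lemma powR_inv_succ2_le (y : R) q : 0 <= y ->
  y `^ q.+2%:R^-1 <= 4 + 6 * (q.+1%:R * q.+2%:R)^-1 * y `^ 2^-1.
Proof.
move=> y0; have q2 : q.+2%:R != 0 :> R by rewrite pnatr_eq0.
set S := y `^ (2 * q.+2%:R)^-1.
have -> : y `^ q.+2%:R^-1 = S ^+ 2 by rewrite exprn_powR //; congr (_ `^ _); field.
have -> : y `^ 2^-1 = S ^+ q.+2 by rewrite exprn_powR //; congr (_ `^ _); field.
exact/sqr_le_pow_bound/powR_ge0.
Qed.

Lemma sum_inv_succ_mul_succ_le1 d : \sum_(q < d) (q.+1%:R * q.+2%:R)^-1 <= 1 :> R.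
Proof.
suff -> : \sum_(q < d) (q.+1%:R * q.+2%:R)^-1 = 1 - d.+1%:R^-1 :> R.
  by rewrite lerBlDr lerDl invr_ge0 ler0n.
elim: d => [|d IH]; first by rewrite big_ord0 invr1 subrr.
rewrite big_ord_recr /= IH.
have d1 : d%:R + 1 != 0 :> R by rewrite natr1 pnatr_eq0.
have d2 : d%:R + 1 + 1 != 0 :> R by rewrite !natr1 pnatr_eq0.
by rewrite -[d.+2%:R]natr1 -[d.+1%:R]natr1; field; rewrite d1 d2.
Qed.

Lemma sqr_powR_half (y : R) : 0 <= y -> (y `^ 2^-1) ^+ 2 = y.
Proof. by move=> y0; rewrite exprn_powR // mulVf ?pnatr_eq0 // powRr1. Qed.

Lemma sum_powR_neg_succ_ratio_le (y : R) d : 1 <= y ->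
  \sum_(q < d) y `^ (- succ_ratio R q) <= 4 * d%:R / y + 6 * y `^ (- 2^-1).
Proof.
move=> y1; have y_gt0 : 0 < y by apply: lt_le_trans y1.
have E q : y `^ (- succ_ratio R q) = y^-1 * y `^ q.+2%:R^-1.
  have -> : - succ_ratio R q = -1 + q.+2%:R^-1.
    have q1 : q%:R + 1 + 1 != 0 :> R by rewrite !natr1 pnatr_eq0.
    by rewrite /succ_ratio -[q.+2%:R]natr1 -[q.+1%:R]natr1; field.
  by rewrite powRD ?(gt_eqF y_gt0) ?implybT // powR_inv1 // ltW.
under eq_bigr => q _ do rewrite E.
rewrite -mulr_sumr; set h := y `^ 2^-1.
apply: (@le_trans _ _ (y^-1 * \sum_(q < d)
    (4 + 6 * (q.+1%:R * q.+2%:R)^-1 * h))).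
  by rewrite ler_pM2l ?invr_gt0 //; apply: ler_sum => q _; apply/powR_inv_succ2_le/ltW.
rewrite big_split /= sumr_const card_ord -mulr_suml -mulr_sumr.
have sum_le1 := sum_inv_succ_mul_succ_le1 d.
have sum_ge0 : 0 <= \sum_(q < d) (q.+1%:R * q.+2%:R)^-1 :> R.
  by apply: sumr_ge0 => q _; rewrite invr_ge0 mulr_ge0 ?ler0n.
set t := \sum_(q < d) _ in sum_le1 sum_ge0 *.
have h_gt0 : 0 < h by apply: powR_gt0.
rewrite powRN -/h -(sqr_powR_half (ltW y_gt0)) -/h.
have hn : h != 0 by rewrite gt_eqF.
have -> : (h ^+ 2)^-1 * (4 *+ d + 6 * t * h) = 4 * d%:R / h ^+ 2 + 6 * (t * h^-1).
  by rewrite -mulr_natr; field.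
by rewrite lerD2l ler_pM2l // ler_pdivrMr // mulVf // mul1r.
Qed.

Lemma one_le_powR (y e : R) : 1 <= y -> 0 <= e -> 1 <= y `^ e.
Proof. by move=> y1 e0; rewrite -(powRr0 y) ler_powR. Qed.

Lemma succ_ratio_ge0 p : 0 <= succ_ratio R p.
Proof. exact/ltW/succ_ratio_gt0. Qed.

Lemma sum_powR_neg_succ_ratio_mul_le (x : R) d p : 1 <= x ->
  \sum_(q < d) x `^ (- (succ_ratio R p * succ_ratio R q)) <=
  4 * d%:R * x `^ (- succ_ratio R p) + 6 * (x `^ 2^-1) `^ (- succ_ratio R p).
Proof.
move=> x1; have y1 := one_le_powR x1 (succ_ratio_ge0 p).
under eq_bigr => q _ do rewrite -mulrN powRrM.
apply: le_trans (sum_powR_neg_succ_ratio_le d y1) _.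
rewrite powRN -mulrA; apply: lerD => //.
by rewrite -!powRrM !mulrN [_ * 2^-1]mulrC.
Qed.

Lemma sum_powR_neg_succ_ratio2_le (x : R) d : 1 <= x ->
  \sum_(p < d) \sum_(q < d) x `^ (- (succ_ratio R p * succ_ratio R q)) <=
  16 * d%:R ^+ 2 / x + 48 * d%:R / x `^ 2^-1 + 36 * x `^ (- 4^-1).
Proof.
move=> x1; set D : R := d%:R; set s := x `^ 2^-1.
have s1 : 1 <= s by rewrite one_le_powR // invr_ge0.
apply: (@le_trans _ _ (\sum_(p < d)
    (4 * D * x `^ (- succ_ratio R p) + 6 * s `^ (- succ_ratio R p)))).
  by apply: ler_sum => p _; apply: sum_powR_neg_succ_ratio_mul_le.
rewrite big_split /= -!mulr_sumr.
apply: (@le_trans _ _ (4 * D * (4 * D / x + 6 * x `^ (- 2^-1)) +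
                       6 * (4 * D / s + 6 * s `^ (- 2^-1)))).
  by apply: lerD; apply: ler_wpM2l; rewrite ?mulr_ge0 ?ler0n ?sum_powR_neg_succ_ratio_le.
have -> : s `^ (- 2^-1) = x `^ (- 4^-1) by rewrite -powRrM; congr (_ `^ _); field.
have s_gt0 : 0 < s by apply: lt_le_trans s1.
rewrite powRN -/s [leLHS](_ : _ = 16 * D ^+ 2 / x + 48 * D / s + 36 * x `^ (- 4^-1)) //.
by field; rewrite !gt_eqF // (lt_le_trans _ x1).
Qed.

Lemma sum_powR_neg_succ_ratio2_scaled_le (al : R) d : 1 <= al -> (0 < d)%N ->
  \sum_(p < d) \sum_(q < d) (al * (d ^ 2)%:R) `^ (- (succ_ratio R p * succ_ratio R q))
  <= 100 * al `^ (- 4^-1).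
Proof.
move=> al1 d_gt0; set D : R := d%:R; set x := al * _.
have D1 : 1 <= D by rewrite /D ler1n.
have D_gt0 : 0 < D by apply: lt_le_trans D1.
have al_gt0 : 0 < al by apply: lt_le_trans al1.
have al0 : 0 <= al := ltW al_gt0.
have x1 : 1 <= x by rewrite /x mulr_ege1 // natrX expr_ge1.
apply: le_trans (sum_powR_neg_succ_ratio2_le d x1) _.
set h := al `^ 2^-1; set a := al `^ (- 4^-1).
have h_gt0 : 0 < h by apply: powR_gt0.
have x_sqrt : x `^ 2^-1 = h * D.
  rewrite /x powRM ?ler0n // natrX -/D -powR_mulrn ?ler0n // -powRrM.
  by rewrite mulfV ?pnatr_eq0 // powRr1 ?ler0n.
have x_root4_le : x `^ (- 4^-1) <= a.
  rewrite (_ : - 4^-1 = 2^-1 * - 2^-1); last by field.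
  rewrite powRrM x_sqrt powRM ?ler0n ?powR_ge0 // -powRrM.
  rewrite (_ : 2^-1 * - 2^-1 = - 4^-1); last by field.
  rewrite -[leRHS]mulr1 ler_pM2l ?powR_gt0 // powRN invf_le1 ?powR_gt0 //.
  by rewrite one_le_powR // invr_ge0.
have inv_al_le : al^-1 <= a by rewrite -powR_inv1 // ler_powR //; lra.
have inv_h_le : h^-1 <= a by rewrite -powRN ler_powR //; lra.
rewrite x_sqrt -/D [X in X + _ <= _](_ : _ = 16 * al^-1 + 48 * h^-1); first lra.
rewrite /x natrX -/D -(sqr_powR_half al0) -/h.
by field; rewrite !gt_eqF.
Qed.

End PowerSums.

Lemma expR1_le4 (R : realType) : expR 1 <= 4 :> R.
Proof.
have half_le : 1 / 2 <= expR (- 2^-1) :> R by have := expR_ge1Dx (- 2^-1 : R); lra.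
have sqrt_e_le2 : expR 2^-1 <= 2 :> R.
  by have := expRxMexpNx_1 (2^-1 : R); have := expR_gt0 (2^-1 : R); nra.
rewrite (_ : 1 = 2%:R * 2^-1 :> R); last by field.
by rewrite expRM_natl expr2; have := expR_gt0 (2^-1 : R); nra.
Qed.

(* Only the last summand matters: [32 / e >= 8], and [expR 8 >= 2 ^ 8]. *)
Lemma gfun_const_ge100 (R : realType) :
  100 <= 1 + 2 * expR (4 / expR 1) + 2 * expR (8 / expR 1) + expR (32 / expR 1) :> R.
Proof.
have e2 : 2 <= expR 1 :> R by have := expR_ge1Dx (1 : R); lra.
have e4 := expR1_le4 R.
have le_8 : 8 <= 32 / expR 1 :> R by rewrite ler_pdivlMr ?expR_gt0 //; lra.
have exp8 : 256 <= expR 8 :> R.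
  rewrite (_ : 8 = 8%:R * 1 :> R); last by rewrite mulr1.
  rewrite expRM_natl.
  have : 2 ^+ 8 <= expR 1 ^+ 8 :> R by apply: lerXn2r => //; rewrite nnegrE; lra.
  by rewrite (_ : 2 ^+ 8 = 256 :> R) // -natrX.
have : expR 8 <= expR (32 / expR 1) :> R by rewrite ler_expR.
have := expR_ge0 (4 / expR 1 : R); have := expR_ge0 (8 / expR 1 : R).
lra.
Qed.

Theorem mainTheorem8 (R : realType) (n : nat) (hn : (2 <= n)%N) :
  Gamma R n \in unitmx /\
  maxnorm (invmx (Gamma R n)) <= 4 /\
  (forall alpha : R, 1 <= alpha ->
     \sum_(k < (n.-1) ^ 2)
        (alpha * ((n.-1) ^ 2)%:R) `^ (- schur_inv (invmx (Gamma R n)) k)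
     <= gfun alpha).
Proof.
split; first by have [] := mulmx1_unit (mul_Gamma_Psi R hn).
rewrite invmx_Gamma //; split; first exact: maxnorm_Psi.
move=> al al1; have d_gt0 : (0 < n.-1)%N by rewrite -ltnS prednK // ltnW.
set x := al * _; have x1 : 1 <= x.
  by rewrite /x mulr_ege1 // ler1n expn_gt0 d_gt0.
apply: (@le_trans _ _ (\sum_(k < n.-1 ^ 2)
    x `^ (- (succ_ratio R (ord_divn k) * succ_ratio R (ord_modn k))))).
  by apply: ler_sum => k _; rewrite ler_powR // lerN2 succ_ratio_le_schur_inv_Psi.
rewrite (sum_ord_divn_modn (fun p q => x `^ (- (succ_ratio R p * succ_ratio R q)))).
apply: le_trans (sum_powR_neg_succ_ratio2_scaled_le al1 d_gt0) _.
by rewrite /gfun powRN ler_wpM2r ?invr_ge0 ?powR_ge0 ?gfun_const_ge100.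
Qed.
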